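(* Let $\Omega \subset \mathbb{R}^n$ be a bounded domain and $V_h \subseteq H^1(\Omega)$ a finite element space. Let $A: \mathbb{R} \to \mathbb{R}$ be a continuously differentiable function, and for $v \in V_h$ write $A(v)$ for the function $x \mapsto A(v(x))$ and $A'(v)$ for $x \mapsto A'(v(x))$. Define the energy $E(v) = \frac{1}{2}(A(v)\nabla v, \nabla v) = \frac{1}{2}\|\sqrt{A(v)}\nabla v\|^2$ for $v \in V_h$. Let $u_h \in V_h$ be a minimizer of $E$ over $V_h$, in the sense that the Gateaux derivative of $E$ at $u_h$ vanishes in every direction $w \in V_h$, i.e. $(A(u_h)\nabla u_h, \nabla w) + \frac{1}{2}(A'(u_h) w \nabla u_h, \nabla u_h) = 0$ for all $w \in V_h$. Assume that $A(v) \geq \alpha > 0$ (pointwise) for all $v \in V_h$, for a constant $\alpha$, and that $A'(u_h) u_h \geq 0$ pointwise. Then there exists a constant $C > 0$ (depending only on $\alpha$) such that $$\|\nabla u_h - \nabla v\|_{L^2(\Omega)}^2 \leq C\,\big(E(v) - E(u_h)\big) \quad \text{for all } v \in V_h.$$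
   Context: $(\cdot,\cdot)$ and $\|\cdot\|$ denote the $L^2(\Omega)$ inner product and norm. The energy has zero right-hand side ($f=0$). *)

From HB Require Import structures.
From mathcomp Require Import all_boot all_order all_algebra.
From mathcomp Require Import all_classical all_reals all_analysis.
From mathcomp Require Import matrix_normedtype.
Import Order.TTheory GRing.Theory Num.Theory.
Set Implicit Arguments. Unset Strict Implicit. Unset Printing Implicit Defensive.
Import numFieldNormedType.Exports.
Local Open Scope classical_set_scope.
Local Open Scope ring_scope.

Section Defs.
Variables (R : realType) (n : nat).

Definition Rn : Type := g_sigma_algebraType (open : set (set 'rV[R]_n)).

Definition box (a b : 'rV[R]_n) : set 'rV[R]_n :=
  [set x | forall i, a 0 i <= x 0 i <= b 0 i].

(* mu is the (Borel) Lebesgue measure on R^n: it gives every box its volume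
   (this determines the measure uniquely on Borel sets). *)
Definition is_lebesgue (mu : {measure set Rn -> \bar R}) : Prop :=
  forall a b : 'rV[R]_n, (forall i, a 0 i <= b 0 i) ->
    mu (box a b) = (\prod_(i < n) (b 0 i - a 0 i))%:E.

Definition dotv (a b : 'rV[R]_n) : R := \sum_(i < n) a 0 i * b 0 i.

Fixpoint iterD (ds : seq 'rV[R]_n) (f : 'rV[R]_n -> R) : 'rV[R]_n -> R :=
  if ds is d :: ds' then (fun x => 'D_d (iterD ds' f) x) else f.

Definition smooth (f : 'rV[R]_n -> R) : Prop :=
  forall ds x, differentiable (iterD ds f) x.

Definition test_fun (Omega : set 'rV[R]_n) (phi : 'rV[R]_n -> R) : Prop :=
  smooth phi /\ compact (closure [set x | phi x != 0]) /\
  closure [set x | phi x != 0] `<=` Omega.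

Variable mu : {measure set Rn -> \bar R}.

Definition L2 (Omega : set 'rV[R]_n) (f : 'rV[R]_n -> R) : Prop :=
  measurable_fun (Omega : set Rn) (f : Rn -> R) /\
  mu.-integrable (Omega : set Rn) (fun x : Rn => ((f x) ^+ 2)%:E).

Definition weak_grad (Omega : set 'rV[R]_n) (v : 'rV[R]_n -> R)
    (g : 'rV[R]_n -> 'rV[R]_n) : Prop :=
  forall phi, test_fun Omega phi -> forall i : 'I_n,
    Rintegral mu (Omega : set Rn) (fun x : Rn => v x * 'D_(delta_mx 0 i) phi x)
    = - Rintegral mu (Omega : set Rn) (fun x : Rn => g x 0 i * phi x).

Definition H1_with_grad (Omega : set 'rV[R]_n) (v : 'rV[R]_n -> R)
    (g : 'rV[R]_n -> 'rV[R]_n) : Prop :=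
  L2 Omega v /\ (forall i : 'I_n, L2 Omega (fun x => g x 0 i)) /\
  weak_grad Omega v g.

Definition fin_dim_subspace (Vh : set ('rV[R]_n -> R)) : Prop :=
  Vh (fun _ => 0) /\
  (forall (a : R) v w, Vh v -> Vh w -> Vh (fun x => a * v x + w x)) /\
  exists (m : nat) (b : 'I_m -> 'rV[R]_n -> R),
    (forall j, Vh (b j)) /\
    forall v, Vh v -> exists c : 'I_m -> R,
      forall x, v x = \sum_(j < m) c j * b j x.

Definition L2int (Omega : set 'rV[R]_n) (f : 'rV[R]_n -> R) : R :=
  Rintegral mu (Omega : set Rn) (f : Rn -> R).

Definition energy (Omega : set 'rV[R]_n) (A : R -> R)
    (grad : ('rV[R]_n -> R) -> 'rV[R]_n -> 'rV[R]_n) (v : 'rV[R]_n -> R) : R :=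
  2^-1 * L2int Omega (fun x => A (v x) * dotv (grad v x) (grad v x)).

End Defs.

From HB Require Import structures.
From mathcomp Require Import all_boot all_order all_algebra.
From mathcomp Require Import all_classical all_reals all_analysis.
From mathcomp Require Import matrix_normedtype.
From mathcomp Require Import ring lra.
Import Order.TTheory GRing.Theory Num.Theory.
Import numFieldNormedType.Exports.
Local Open Scope classical_set_scope.
Local Open Scope ring_scope.

(* Testing the Euler-Lagrange equation with w = u_h gives
   (A(u_h) grad u_h, grad u_h) = -1/2 (A'(u_h) u_h grad u_h, grad u_h) <= 0,
   so E(u_h) = 0.  Pointwise, |a - b|^2 <= 2|a|^2 + 2|b|^2 and alpha <= A, so
   |grad u_h - grad v|^2 <= (2/alpha) (A(u_h)|grad u_h|^2 + A(v)|grad v|^2);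
   integrating gives the bound with C = 4/alpha, since E(v) - E(u_h) = E(v). *)

Section Dotv.
Context {R : realType} {n : nat}.
Implicit Types (a b : 'rV[R]_n) (alpha p q : R).

Lemma dotv_ge0 a : 0 <= dotv a a.
Proof. by apply: sumr_ge0 => i _; rewrite -expr2 sqr_ge0. Qed.

Lemma dotv_subr_le a b :
  dotv (a - b) (a - b) <= 2 * dotv a a + 2 * dotv b b.
Proof.
rewrite /dotv !mulr_sumr -big_split /=; apply: ler_sum => i _.
by rewrite !mxE; have := sqr_ge0 (a 0 i + b 0 i); rewrite expr2; nra.
Qed.

Lemma dotv_subr_le_weighted alpha p q a b :
  0 < alpha -> alpha <= p -> alpha <= q ->
  dotv (a - b) (a - b) <= 2 / alpha * (p * dotv a a + q * dotv b b).
Proof.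
move=> alpha_gt0 alpha_le_p alpha_le_q.
have pa : alpha * dotv a a <= p * dotv a a by rewrite ler_wpM2r ?dotv_ge0.
have qb : alpha * dotv b b <= q * dotv b b by rewrite ler_wpM2r ?dotv_ge0.
have k_ge0 : 0 <= 2 / alpha by rewrite divr_ge0 ?ltW.
have k_alpha : 2 / alpha * alpha = 2 by rewrite mulfVK ?gt_eqF.
have := ler_wpM2l k_ge0 pa; have := ler_wpM2l k_ge0 qb.
rewrite !mulrA k_alpha => kqb kpa.
by apply: (le_trans (dotv_subr_le a b)); lra.
Qed.

End Dotv.

Section Integrals.
Context {d : measure_display} {T : measurableType d} {R : realType}.
Context {mu : {measure set T -> \bar R}} {D : set T}.

Lemma measurable_dotv {n : nat} {f g : T -> 'rV[R]_n} :
  (forall i, measurable_fun D (fun x => f x 0 i)) ->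
  (forall i, measurable_fun D (fun x => g x 0 i)) ->
  measurable_fun D (fun x => dotv (f x) (g x)).
Proof.
move=> mf mg; apply: measurable_sum => i.
exact: measurable_realfun.measurable_funM.
Qed.

Lemma le_Rintegral_dominated {f g : T -> R} :
  measurable D -> measurable_fun D f -> mu.-integrable D (EFin \o g) ->
  (forall x, D x -> 0 <= f x <= g x) ->
  \int[mu]_(x in D) f x <= \int[mu]_(x in D) g x.
Proof.
move=> mD mf ig fg; apply: le_Rintegral => // [|x Dx]; last by case/andP: (fg x Dx).
apply: le_integrable ig => //; first exact/measurable_realfun.measurable_EFinP.
move=> x Dx /=; have /andP[f_ge0 f_le_g] := fg x Dx.
by rewrite lee_fin !ger0_norm // (le_trans f_ge0).
Qed.

End Integrals.

Section Energy.
Context {R : realType} {n : nat} {mu : {measure set Rn R n -> \bar R}}.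
Context {Omega : set 'rV[R]_n} {A : R -> R}.
Context {grad : ('rV[R]_n -> R) -> 'rV[R]_n -> 'rV[R]_n}.

Local Notation weighted_sq u :=
  (fun x => A (u x) * dotv (grad u x) (grad u x)).

Lemma energy_eq0_of_critical (u : 'rV[R]_n -> R) :
  (forall x, Omega x -> 0 <= A (u x)) ->
  (forall x, Omega x -> 0 <= derive1 A (u x) * u x) ->
  L2int mu Omega (weighted_sq u)
    + 2^-1 * L2int mu Omega
        (fun x => derive1 A (u x) * u x * dotv (grad u x) (grad u x)) = 0 ->
  energy mu Omega A grad u = 0.
Proof.
move=> A_ge0 dAu_ge0 crit.
have I_ge0 : 0 <= L2int mu Omega (weighted_sq u).
  by apply: Rintegral_ge0 => x Ox; rewrite mulr_ge0 ?A_ge0 ?dotv_ge0.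
have J_ge0 : 0 <= L2int mu Omega
    (fun x => derive1 A (u x) * u x * dotv (grad u x) (grad u x)).
  by apply: Rintegral_ge0 => x Ox; rewrite mulr_ge0 ?dAu_ge0 ?dotv_ge0.
by rewrite /energy; lra.
Qed.

Lemma grad_dist_le_energy {alpha : R} {u v : 'rV[R]_n -> R} :
  0 < alpha -> measurable (Omega : set (Rn R n)) ->
  (forall i, measurable_fun (Omega : set (Rn R n)) (fun x => grad u x 0 i)) ->
  (forall i, measurable_fun (Omega : set (Rn R n)) (fun x => grad v x 0 i)) ->
  mu.-integrable (Omega : set (Rn R n)) (EFin \o weighted_sq u) ->
  mu.-integrable (Omega : set (Rn R n)) (EFin \o weighted_sq v) ->
  (forall x, Omega x -> alpha <= A (u x)) ->
  (forall x, Omega x -> alpha <= A (v x)) ->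
  L2int mu Omega (fun x => dotv (grad u x - grad v x) (grad u x - grad v x))
    <= 4 / alpha * (energy mu Omega A grad u + energy mu Omega A grad v).
Proof.
move=> alpha_gt0 mO mu_grad mv_grad iu iv Au_ge Av_ge.
have iuv : mu.-integrable (Omega : set (Rn R n))
    (EFin \o (fun x => weighted_sq u x + weighted_sq v x)).
  exact: (integrableD mO iu iv).
have mdiff i : measurable_fun (Omega : set (Rn R n))
    (fun x => (grad u x - grad v x) 0 i).
  under eq_fun do rewrite !mxE.
  exact: (measurable_realfun.measurable_funB (mu_grad i) (mv_grad i)).
have dist_le x : Omega x -> 0 <= dotv (grad u x - grad v x) (grad u x - grad v x)
    <= 2 / alpha * (weighted_sq u x + weighted_sq v x).
  by move=> Ox; rewrite dotv_ge0 dotv_subr_le_weighted ?Au_ge ?Av_ge.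
apply: (le_trans (le_Rintegral_dominated mO (measurable_dotv mdiff mdiff)
  (integrableZl mO (2 / alpha) iuv) dist_le)).
rewrite RintegralZl // RintegralD // /energy /L2int.
by rewrite le_eqVlt; apply/orP; left; apply/eqP; field; rewrite gt_eqF.
Qed.

End Energy.

Theorem mainTheorem3 (R : realType) (alpha : R) (halpha : 0 < alpha) :
  exists C : R, 0 < C /\
  forall (n : nat) (mu : {measure set Rn R n -> \bar R})
         (Omega : set 'rV[R]_n)
         (Vh : set ('rV[R]_n -> R))
         (grad : ('rV[R]_n -> R) -> 'rV[R]_n -> 'rV[R]_n)
         (A : R -> R) (uh : 'rV[R]_n -> R),
    is_lebesgue mu ->
    open Omega -> connected Omega -> Omega !=set0 -> bounded_set Omega ->
    fin_dim_subspace Vh ->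
    (forall v, Vh v -> H1_with_grad mu Omega v (grad v)) ->
    (forall x, derivable A x 1) -> continuous (derive1 A) ->
    (* well-definedness of the integrals (automatic for finite element spaces) *)
    (forall v w, Vh v -> Vh w ->
       mu.-integrable (Omega : set (Rn R n))
         (fun x : Rn R n => (A (v x) * dotv (grad v x) (grad w x))%:E) /\
       mu.-integrable (Omega : set (Rn R n))
         (fun x : Rn R n => ((derive1 A) (v x) * w x * dotv (grad v x) (grad v x))%:E)) ->
    (forall v, Vh v -> forall x, Omega x -> alpha <= A (v x)) ->
    Vh uh ->
    (forall w, Vh w ->
       L2int mu Omega (fun x => A (uh x) * dotv (grad uh x) (grad w x))
       + 2^-1 * L2int mu Omega
           (fun x => (derive1 A) (uh x) * w x * dotv (grad uh x) (grad uh x)) = 0) ->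
    (forall x, Omega x -> 0 <= (derive1 A) (uh x) * uh x) ->
    forall v, Vh v ->
      L2int mu Omega (fun x => dotv (grad uh x - grad v x) (grad uh x - grad v x))
      <= C * (energy mu Omega A grad v - energy mu Omega A grad uh).
Proof.
exists (4 / alpha); split; first by rewrite divr_gt0.
move=> n mu Omega Vh grad A uh _ oO _ _ _ _ H1 _ _ Hint HA Vuh crit dAuh_ge0 v Vv.
have mO : measurable (Omega : set (Rn R n)) by exact: sub_sigma_algebra.
have Auh_ge0 x : Omega x -> 0 <= A (uh x).
  by move=> Ox; rewrite (le_trans (ltW halpha)) ?HA.
have Euh0 : energy mu Omega A grad uh = 0.
  exact: energy_eq0_of_critical Auh_ge0 dAuh_ge0 (crit _ Vuh).
have grad_meas w : Vh w -> forall i, measurable_fun (Omega : set (Rn R n))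
    (fun x => grad w x 0 i).
  by move=> Vw i; have [_ [/(_ i) []]] := H1 _ Vw.
have := grad_dist_le_energy halpha mO (grad_meas _ Vuh) (grad_meas _ Vv)
  (Hint _ _ Vuh Vuh).1 (Hint _ _ Vv Vv).1 (HA _ Vuh) (HA _ Vv).
by rewrite Euh0 add0r subr0.
Qed.
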